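(* Let $R$ be a ring, $P$ a discrete projective left $R$-module and $Q$ a discrete projective right $R$-module, and let $Q^*=\operatorname{Hom}_R(Q,R)$ carry the topology of pointwise convergence. Then every continuous $R$-linear map $Q^*\to P$ has finitely generated image.
   Context: The topology of pointwise convergence on $Q^*$ has as a base of neighborhoods of $0$ the annihilators of finitely generated submodules of $Q$; $P$ is discrete. *)

From HB Require Import structures.
From mathcomp Require Import all_boot all_order all_algebra.
Set Implicit Arguments.
Unset Strict Implicit.
Unset Printing Implicit Defensive.
Import GRing.Theory.
Local Open Scope ring_scope.

(* Left R-modules are [lmodType R]; right R-modules are [lmodType R^c]
   (for q : Q and r : R, the right action q.r is written (r : R^c) *: q). *)

Definition projective (S : pzRingType) (P : lmodType S) : Prop :=
  forall (M N : lmodType S) (g : {linear M -> N}) (h : {linear P -> N}),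
    (forall y : N, exists x : M, g x = y) ->
    exists k : {linear P -> M}, forall x : P, g (k x) = h x.

Record dual (R : pzRingType) (Q : lmodType R^c) := Dual {
  dfun :> Q -> R;
  dfunD : forall x y : Q, dfun (x + y) = dfun x + dfun y;
  dfunZ : forall (r : R) (x : Q), dfun ((r : R^c) *: x) = dfun x * r }.

Section DualOps.
Variables (R : pzRingType) (Q : lmodType R^c).

Lemma dual_add_D (f g : dual Q) (x y : Q) :
  f (x + y) + g (x + y) = (f x + g x) + (f y + g y).
Proof. by rewrite !dfunD addrACA. Qed.

Lemma dual_add_Z (f g : dual Q) (r : R) (x : Q) :
  f ((r : R^c) *: x) + g ((r : R^c) *: x) = (f x + g x) * r.
Proof. by rewrite !dfunZ mulrDl. Qed.

Definition dual_add (f g : dual Q) : dual Q :=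
  @Dual R Q (fun x => f x + g x) (dual_add_D f g) (dual_add_Z f g).

Lemma dual_scale_D (r : R) (f : dual Q) (x y : Q) :
  r * f (x + y) = r * f x + r * f y.
Proof. by rewrite dfunD mulrDr. Qed.

Lemma dual_scale_Z (r : R) (f : dual Q) (s : R) (x : Q) :
  r * f ((s : R^c) *: x) = (r * f x) * s.
Proof. by rewrite dfunZ mulrA. Qed.

Definition dual_scale (r : R) (f : dual Q) : dual Q :=
  @Dual R Q (fun x => r * f x) (dual_scale_D r f) (dual_scale_Z r f).

Definition in_span (s : seq Q) (q : Q) : Prop :=
  exists c : 'I_(size s) -> R^c, q = \sum_(i < size s) c i *: nth 0 s i.

Definition ann (s : seq Q) (h : dual Q) : Prop :=
  forall q : Q, in_span s q -> h q = 0.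

(* Topology of pointwise convergence on Q^*: U is open iff every f in U has
   a neighbourhood f + Ann(N) inside U, N a finitely generated submodule. *)
Definition pw_open (U : dual Q -> Prop) : Prop :=
  forall f : dual Q, U f ->
    exists s : seq Q, forall h : dual Q, ann s h -> U (dual_add f h).

End DualOps.

Definition dual_linear (R : pzRingType) (Q : lmodType R^c) (P : lmodType R)
    (phi : dual Q -> P) : Prop :=
  (forall f g : dual Q, phi (dual_add f g) = phi f + phi g) /\
  (forall (r : R) (f : dual Q), phi (dual_scale r f) = r *: phi f).

Definition continuous_discrete (R : pzRingType) (Q : lmodType R^c)
    (P : lmodType R) (phi : dual Q -> P) : Prop :=
  forall V : P -> Prop, pw_open (fun f => V (phi f)).

Definition fg_image (R : pzRingType) (Q : lmodType R^c) (P : lmodType R)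
    (phi : dual Q -> P) : Prop :=
  exists s : seq P, forall y : P,
    (exists f : dual Q, phi f = y) <->
    (exists c : 'I_(size s) -> R, y = \sum_(i < size s) c i *: nth 0 s i).

(* Projectivity of Q gives a local dual basis: for every finite s there are
   x_1, ..., x_n in Q and d_1, ..., d_n in Q^* with q = sum_j x_j d_j(q) for
   all q in the submodule spanned by s.  Since P is discrete, continuity of
   phi at 0 yields such an s with phi(Ann s) = 0.  For every f in Q^*,
   f - sum_j f(x_j) d_j annihilates s, hence phi f = sum_j f(x_j) phi(d_j),
   and the image of phi is generated by phi(d_1), ..., phi(d_n). *)

From HB Require Import structures.
From mathcomp Require Import all_boot all_order all_algebra finmap.
From mathcomp.multinomials Require Import monalg.
From mathcomp Require Import boolp.

Set Implicit Arguments.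
Unset Strict Implicit.
Unset Printing Implicit Defensive.
Import GRing.Theory.
Local Open Scope ring_scope.

Section DualModule.
Variables (R : pzRingType) (Q : lmodType R^c).
Implicit Types (f g h : dual Q) (q : Q).

Lemma dual_ext f g : f =1 g -> f = g.
Proof.
case: f g => f fD fZ [g gD gZ] /= /funext efg; subst g.
by congr Dual; apply: Prop_irrelevance.
Qed.

Lemma dfun0 f : f 0 = 0.
Proof. by rewrite -(scale0r (0 : Q)) dfunZ mulr0. Qed.

Lemma dfun_sum f (I : Type) (r : seq I) (G : I -> Q) :
  f (\sum_(i <- r) G i) = \sum_(i <- r) f (G i).
Proof. exact: (big_morph f (dfunD f) (dfun0 f)). Qed.

Definition dual_zero : dual Q :=
  @Dual R Q (fun _ => 0)
    (fun _ _ => esym (addr0 0)) (fun r _ => esym (mul0r r)).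

Definition dual_opp f : dual Q := dual_scale (-1) f.

(* Equality on Q^* is undecidable; the classical choice structure is only
   there because zmodType requires a choiceType. *)
HB.instance Definition _ := gen_eqMixin (dual Q).
HB.instance Definition _ := gen_choiceMixin (dual Q).

Lemma dual_addA : associative (@dual_add R Q).
Proof. by move=> f g h; apply: dual_ext => q /=; rewrite addrA. Qed.

Lemma dual_addC : commutative (@dual_add R Q).
Proof. by move=> f g; apply: dual_ext => q /=; rewrite addrC. Qed.

Lemma dual_add0 : left_id dual_zero (@dual_add R Q).
Proof. by move=> f; apply: dual_ext => q /=; rewrite add0r. Qed.

Lemma dual_addN : left_inverse dual_zero dual_opp (@dual_add R Q).
Proof. by move=> f; apply: dual_ext => q /=; rewrite mulN1r addNr. Qed.

HB.instance Definition _ :=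
  GRing.isZmodule.Build (dual Q) dual_addA dual_addC dual_add0 dual_addN.

Lemma dual_scaleA a b f : dual_scale a (dual_scale b f) = dual_scale (a * b) f.
Proof. by apply: dual_ext => q /=; rewrite mulrA. Qed.

Lemma dual_scale1 : left_id 1 (@dual_scale R Q).
Proof. by move=> f; apply: dual_ext => q /=; rewrite mul1r. Qed.

Lemma dual_scaleDr : right_distributive (@dual_scale R Q) +%R.
Proof. by move=> a f g; apply: dual_ext => q /=; rewrite mulrDr. Qed.

Lemma dual_scaleDl f : {morph (@dual_scale R Q)^~ f : a b / a + b}.
Proof. by move=> a b; apply: dual_ext => q /=; rewrite mulrDl. Qed.

HB.instance Definition _ := GRing.Zmodule_isLmodule.Build R (dual Q)
  dual_scaleA dual_scale1 dual_scaleDr dual_scaleDl.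

Lemma dual_sumE (I : Type) (r : seq I) (F : I -> dual Q) q :
  (\sum_(i <- r) F i) q = \sum_(i <- r) F i q.
Proof. by elim: r => [|i r IH]; rewrite ?big_nil ?big_cons //= IH. Qed.

End DualModule.

Section FreeCover.
Local Open Scope fset_scope.
Local Open Scope ring_scope.
Variables (R : pzRingType) (Q : lmodType R^c).

(* The free right R-module on the set Q.  monalg only equips {malg R[Q]} with
   the left action, and only for nontrivial rings. *)
Definition rfree := {malg R[Q]}.
HB.instance Definition _ := GRing.Zmodule.on rfree.
Implicit Types (g h : rfree) (q : Q).

Definition rfree_scale (c : R^c) g : rfree :=
  [malg k in msupp g => g@_k * (c : R)].

Lemma rfree_scaleE c g k : (rfree_scale c g)@_k = g@_k * (c : R).
Proof. by rewrite /rfree_scale mcoeffE; case: msuppP; rewrite ?mul0r. Qed.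

Lemma rfree_scaleA a b g :
  rfree_scale a (rfree_scale b g) = rfree_scale (a * b) g.
Proof. by apply/malgP => k; rewrite !rfree_scaleE mulrA. Qed.

Lemma rfree_scale1 : left_id 1 rfree_scale.
Proof. by move=> g; apply/malgP => k; rewrite rfree_scaleE mulr1. Qed.

Lemma rfree_scaleDr : right_distributive rfree_scale +%R.
Proof.
by move=> c g h; apply/malgP => k; rewrite !(rfree_scaleE, mcoeffD) mulrDl.
Qed.

Lemma rfree_scaleDl g : {morph rfree_scale^~ g : a b / a + b}.
Proof.
by move=> a b; apply/malgP => k; rewrite !(rfree_scaleE, mcoeffD) mulrDr.
Qed.

HB.instance Definition _ := GRing.Zmodule_isLmodule.Build R^c rfree
  rfree_scaleA rfree_scale1 rfree_scaleDr rfree_scaleDl.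

Lemma msuppZ_rfree_le c g : msupp (c *: g) `<=` msupp g.
Proof.
apply/fsubsetP => k; rewrite -!mcoeff_neq0 rfree_scaleE.
by apply: contraNN => /eqP ->; rewrite mul0r.
Qed.

Definition lincomb g : Q := \sum_(k <- msupp g) (g@_k : R^c) *: k.

Lemma lincombEw (X : {fset Q}) g :
  msupp g `<=` X -> lincomb g = \sum_(k <- X) (g@_k : R^c) *: k.
Proof.
move=> le; rewrite /lincomb (big_fset_incl _ le) // => k _ /mcoeff_outdom ->.
by rewrite scale0r.
Qed.

Lemma lincomb_is_linear : linear lincomb.
Proof.
move=> a g h; set X := msupp g `|` msupp h.
have le_gX : msupp g `<=` X by apply: fsubsetUl.
have le_hX : msupp h `<=` X by apply: fsubsetUr.
have le_sX : msupp (a *: g + h) `<=` X.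
  exact: fsubset_trans (msuppD_le _ _) (fsetSU _ (msuppZ_rfree_le _ _)).
rewrite (lincombEw le_gX) (lincombEw le_hX) (lincombEw le_sX).
rewrite scaler_sumr -big_split; apply: eq_bigr => k _.
by rewrite mcoeffD rfree_scaleE scalerDl scalerA.
Qed.

HB.instance Definition _ :=
  GRing.isLinear.Build R^c rfree Q _ lincomb lincomb_is_linear.

Lemma lincombU q : lincomb << (1 : R) *g q >> = q.
Proof. by rewrite (lincombEw msuppU_le) big_seq_fset1 mcoeffUU scale1r. Qed.

Lemma projective_local_dual_basis (s : seq Q) : projective Q ->
  exists (X : seq Q) (d : Q -> dual Q),
    forall q, in_span s q -> q = \sum_(x <- X) (d x q : R^c) *: x.
Proof.
move=> projQ.
have [k lincombK] :=
  projQ rfree Q lincomb idfun (fun q => ex_intro _ _ (lincombU q)).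
have coefD x u v : (k (u + v))@_x = (k u)@_x + (k v)@_x.
  by rewrite linearD mcoeffD.
have coefZ x r u : (k ((r : R^c) *: u))@_x = (k u)@_x * r.
  by rewrite linearZ rfree_scaleE.
pose X := \bigcup_(y <- s) msupp (k y).
have suppX q : in_span s q -> msupp (k q) `<=` X.
  case=> c ->; rewrite linear_sum.
  apply: (big_ind (fun g => msupp g `<=` X)) => [|g h le_gX le_hX|i _].
  - by rewrite msupp0 fsub0set.
  - by apply: fsubset_trans (msuppD_le _ _) _; rewrite fsubUset le_gX.
  - rewrite linearZ; apply: fsubset_trans (msuppZ_rfree_le _ _) _.
    by apply: bigfcup_sup => //; apply: mem_nth.
exists X, (fun x => @Dual R Q (fun q => (k q)@_x) (coefD x) (coefZ x)) => q spq.
by rewrite -(lincombEw (suppX q spq)) lincombK.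
Qed.

End FreeCover.

Section LinearImage.
Variables (R : pzRingType) (P : lmodType R) (Q : lmodType R^c).

Lemma dual_linear_is_linear (phi : dual Q -> P) :
  dual_linear phi -> linear phi.
Proof. by case=> phiD phiZ a f g; rewrite phiD phiZ. Qed.

Lemma continuous_discrete_ann (phi : {additive dual Q -> P}) :
  continuous_discrete phi -> exists s, forall h, ann s h -> phi h = 0.
Proof.
move=> cont; have [s ann_s] := cont (eq^~ 0) 0 (raddf0 phi).
by exists s => h /ann_s; rewrite -[dual_add 0 h]/(0 + h) add0r.
Qed.

Lemma ann_sub_expansion (s X : seq Q) (d : Q -> dual Q) (f : dual Q) :
  (forall q, in_span s q -> q = \sum_(x <- X) (d x q : R^c) *: x) ->
  ann s (f - \sum_(x <- X) f x *: d x).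
Proof.
move=> basis q /basis qE; rewrite /= dual_sumE {1}qE dfun_sum mulN1r.
by apply/eqP; rewrite subr_eq0; apply/eqP/eq_bigr => x _; rewrite dfunZ.
Qed.

Lemma fg_image_expansion (phi : {linear dual Q -> P}) (X : seq Q)
    (d : Q -> dual Q) :
  (forall f, exists c : Q -> R, phi f = \sum_(x <- X) c x *: phi (d x)) ->
  fg_image phi.
Proof.
move=> expand; exists [seq phi (d x) | x <- X] => y; rewrite size_map; split.
  case=> f <-; have [c ->] := expand f; exists (fun i => c X`_i).
  by rewrite (big_nth 0) big_mkord; apply: eq_bigr => i _; rewrite (nth_map 0).
case=> c ->; exists (\sum_(i < size X) c i *: d X`_i).
by rewrite linear_sum; apply: eq_bigr => i _; rewrite linearZ (nth_map 0).
Qed.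

End LinearImage.

Theorem lemma3p1 (R : pzRingType) (P : lmodType R) (Q : lmodType R^c)
  (hP : projective P) (hQ : projective Q) (phi : dual Q -> P) :
  dual_linear phi -> continuous_discrete phi -> fg_image phi.
Proof.
move=> /dual_linear_is_linear lin cont.
pose psi : {linear dual Q -> P} :=
  HB.pack phi (GRing.isLinear.Build R _ _ _ phi lin).
have [s ker_s] := continuous_discrete_ann (cont : continuous_discrete psi).
have [X [d basis]] := projective_local_dual_basis s hQ.
apply: (@fg_image_expansion _ _ _ psi X d) => f; exists f.
have ker_f := ker_s _ (ann_sub_expansion f basis).
rewrite -{1}(subrK (\sum_(x <- X) f x *: d x) f) linearD ker_f add0r linear_sum.
by apply: eq_bigr => x _; rewrite linearZ.
Qed.
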